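(* Let $\Gamma$ be a group, $M$ a $\Gamma$-module, and $\Delta$ the subgroup of $\Gamma$ consisting of the elements acting trivially on $M$. Then the inflation map $H^1(\Gamma/\Delta,M)\to H^1(\Gamma,M)$ restricts to an isomorphism $H^1_{\rm loc}(\Gamma/\Delta,M)\cong H^1_{\rm loc}(\Gamma,M)$.
   Context: For a group $\Gamma$ and a $\Gamma$-module $M$, $H^1_{\rm loc}(\Gamma,M)$ is the subgroup of $H^1(\Gamma,M)$ consisting of the classes $[Z]$ of cocycles $Z$ such that for every $\gamma\in\Gamma$ there exists $m_\gamma\in M$ with $Z_\gamma=\gamma m_\gamma-m_\gamma$. *)

From HB Require Import structures.
From mathcomp Require Import all_boot all_order all_algebra monoid.
Set Implicit Arguments. Unset Strict Implicit. Unset Printing Implicit Defensive.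
Import GRing.Theory.

Section Cohomology.
Variables (G : groupType) (M : zmodType).

Definition is_module (act : G -> M -> M) : Prop :=
  [/\ (forall m, act 1%g m = m),
      (forall g h m, act (g * h)%g m = act g (act h m)),
      (forall g, act g 0%R = 0%R) &
      (forall g m n, act g (m + n)%R = (act g m + act g n)%R)].

Definition cocycle (act : G -> M -> M) (Z : G -> M) : Prop :=
  forall g h, Z (g * h)%g = (Z g + act g (Z h))%R.

Definition coboundary (act : G -> M -> M) (Z : G -> M) : Prop :=
  exists m : M, forall g, Z g = (act g m - m)%R.

Definition cohomologous (act : G -> M -> M) (Z Z' : G -> M) : Prop :=
  coboundary act (fun g => Z g - Z' g)%R.

(* cocycles whose class lies in H^1_loc *)
Definition loc_cocycle (act : G -> M -> M) (Z : G -> M) : Prop :=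
  cocycle act Z /\ forall g, exists m : M, Z g = (act g m - m)%R.

Definition trivially_acting (act : G -> M -> M) (g : G) : Prop :=
  forall m, act g m = m.

End Cohomology.

(* pi : G -> Q presents Q as the quotient group G / D, D given as a predicate *)
Definition is_quotient_map (G Q : groupType) (D : G -> Prop) (pi : G -> Q) : Prop :=
  [/\ (forall x y, pi (x * y)%g = (pi x * pi y)%g),
      (forall q, exists x, pi x = q) &
      (forall x, pi x = 1%g <-> D x)].

Definition inflation (G Q : groupType) (M : Type) (pi : G -> Q) (Z : Q -> M) : G -> M :=
  fun g => Z (pi g).

(* The quotient G/D is presented by a surjective morphism pi : G -> Q with
   kernel D, and Q acts on M through pi.  The proof has two halves.
   - Compatibility of inflation (Z |-> Z \o pi) with the cohomological
     notions: it maps (local) cocycles to (local) cocycles and coboundaries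
     to coboundaries, and since pi is surjective it also reflects
     coboundaries and local cocycles.  This gives well-definedness and
     injectivity on classes.
   - Surjectivity: a local cocycle W of G vanishes on D, since on d in D
     every coboundary value d.m - m is 0; a cocycle vanishing on the kernel
     of pi is constant on the fibres of pi, hence factors as Z \o pi, and Z
     is then a local cocycle of Q because its inflation is. *)

From HB Require Import structures.
From mathcomp Require Import all_boot all_order all_algebra monoid.
From Stdlib Require Import ClassicalEpsilon FunctionalExtensionality.
Import GRing.Theory.

Set Implicit Arguments.
Unset Strict Implicit.
Unset Printing Implicit Defensive.

Lemma factor_through_surjection (A B C : Type) (pi : A -> B) (W : A -> C) :
    (forall b, exists a, pi a = b) ->
    (forall x y, pi x = pi y -> W x = W y) ->
  exists Z : B -> C, forall a, Z (pi a) = W a.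
Proof.
move=> piS Wfib.
pose s b := proj1_sig (constructive_indefinite_description _ (piS b)).
have sP b : pi (s b) = b by rewrite /s; case: constructive_indefinite_description.
by exists (fun b => W (s b)) => a; apply: Wfib; rewrite sP.
Qed.

Section CocycleKernel.
Variables (G : groupType) (M : zmodType) (act : G -> M -> M).
Hypothesis act0 : forall g, act g 0%R = 0%R.

Lemma loc_cocycle_trivially_acting (W : G -> M) (d : G) :
  loc_cocycle act W -> trivially_acting act d -> W d = 0%R.
Proof. by move=> [_ lW] dtriv; have [m ->] := lW d; rewrite dtriv subrr. Qed.

Lemma cocycle_constant_on_cosets (W : G -> M) (D : G -> Prop) :
    cocycle act W -> (forall d, D d -> W d = 0%R) ->
  forall x y, D (x^-1 * y)%g -> W x = W y.
Proof.
move=> cW WD x y Dxy.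
by rewrite -[y](mulVKg x) cW [W (_ * _)%g]WD // act0 addr0.
Qed.

Lemma cohomologous_refl (W : G -> M) : cohomologous act W W.
Proof. by exists 0%R => g; rewrite act0 !subrr. Qed.

End CocycleKernel.

Section Inflation.
Variables (G Q : groupType) (M : zmodType).
Variables (act : G -> M -> M) (actQ : Q -> M -> M) (pi : G -> Q).
Hypothesis actQ_pi : forall g m, actQ (pi g) m = act g m.

Lemma inflation_coboundary (Z : Q -> M) :
  coboundary actQ Z -> coboundary act (inflation pi Z).
Proof. by move=> [m Hm]; exists m => g; rewrite /inflation Hm actQ_pi. Qed.

Hypothesis piM : forall x y, pi (x * y)%g = (pi x * pi y)%g.

Lemma inflation_loc_cocycle (Z : Q -> M) :
  loc_cocycle actQ Z -> loc_cocycle act (inflation pi Z).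
Proof.
move=> [cZ lZ]; split=> [g h|g]; first by rewrite /inflation piM cZ actQ_pi.
by have [m Hm] := lZ (pi g); exists m; rewrite /inflation Hm actQ_pi.
Qed.

Hypothesis piS : forall q, exists g, pi g = q.

Lemma inflation_coboundary_reflect (Z : Q -> M) :
  coboundary act (inflation pi Z) -> coboundary actQ Z.
Proof.
move=> [m Hm]; exists m => q; have [g <-] := piS q.
by rewrite actQ_pi -Hm.
Qed.

Lemma inflation_loc_cocycle_reflect (Z : Q -> M) :
  loc_cocycle act (inflation pi Z) -> loc_cocycle actQ Z.
Proof.
move=> [cZ lZ]; split=> [q1 q2|q].
  have [g1 <-] := piS q1; have [g2 <-] := piS q2.
  by rewrite -piM actQ_pi; apply: cZ.
have [g <-] := piS q; have [m Hm] := lZ g.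
by exists m; rewrite actQ_pi; apply: Hm.
Qed.

End Inflation.

Theorem lemma13 (G Q : groupType) (M : zmodType)
    (act : G -> M -> M) (actQ : Q -> M -> M) (pi : G -> Q)
    (Hmod : is_module act)
    (Hpi : is_quotient_map (trivially_acting act) pi)
    (HactQ : forall g m, actQ (pi g) m = act g m) :
  (forall Z, loc_cocycle actQ Z -> loc_cocycle act (inflation pi Z)) /\
  (forall Z1 Z2, loc_cocycle actQ Z1 -> loc_cocycle actQ Z2 ->
     cohomologous actQ Z1 Z2 ->
     cohomologous act (inflation pi Z1) (inflation pi Z2)) /\
  (forall Z1 Z2, loc_cocycle actQ Z1 -> loc_cocycle actQ Z2 ->
     cohomologous act (inflation pi Z1) (inflation pi Z2) ->
     cohomologous actQ Z1 Z2) /\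
  (forall W, loc_cocycle act W ->
     exists Z, loc_cocycle actQ Z /\ cohomologous act (inflation pi Z) W).
Proof.
have [_ _ act0 _] := Hmod; have [piM piS piK] := Hpi.
split; first exact: inflation_loc_cocycle.
split; first by move=> Z1 Z2 _ _; apply: inflation_coboundary.
split; first by move=> Z1 Z2 _ _; apply: inflation_coboundary_reflect.
move=> W locW.
have Wfib : forall x y, pi x = pi y -> W x = W y.
  move=> x y pixy.
  apply: (cocycle_constant_on_cosets act0 locW.1 (D := trivially_acting act)).
    by move=> d; apply: loc_cocycle_trivially_acting.
  by apply/piK; apply: (@mulgI _ (pi x)); rewrite -piM mulVKg mulg1 pixy.
have [Z ZW] := factor_through_surjection piS Wfib.
have infZ : inflation pi Z = W by apply: functional_extensionality.
exists Z; rewrite infZ; split; last exact: cohomologous_refl.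
by apply: (inflation_loc_cocycle_reflect HactQ piM piS); rewrite infZ.
Qed.
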